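(* Let $B=\{\mathtt x_1:\nu_1,\dots,\mathtt x_n:\nu_n\}$ be a base, $\mathtt M$ a term, and let $\kappa=\Pi\mathtt z_1^{\tau_1}.\cdots\Pi\mathtt z_m^{\tau_m}.\gamma$. Write $\mathtt Q\overrightarrow{[\mathtt N/\mathtt x]}_j^k$ for $\mathtt Q[\mathtt N_j/\mathtt x_j]\cdots[\mathtt N_k/\mathtt x_k]$ (no substitution if $k<j$), similarly for types and for $\overrightarrow{[\mathtt P/\mathtt z]}_j^k$. Quantify over all closed terms $\mathtt N_1,\dots,\mathtt N_n$ with $\mathrm{Comp}(\emptyset,\mathtt N_j,\nu_j\overrightarrow{[\mathtt N/\mathtt x]}_1^{j-1})$ for $j\le n$ and all $\mathtt P_1,\dots,\mathtt P_m$ with $\mathrm{Comp}(\emptyset,\mathtt P_i,\tau_i\overrightarrow{[\mathtt N/\mathtt x]}_1^{n}\overrightarrow{[\mathtt P/\mathtt z]}_1^{i-1})$ for $i\le m$. Then: (1) if $\gamma=\mathsf{Nat}$, $\mathrm{Comp}(B,\mathtt M,\kappa)$ holds iff for all such $\mathtt N_j,\mathtt P_i$, $\vdash\mathtt M\overrightarrow{[\mathtt N/\mathtt x]}_1^n\mathtt P_1\cdots\mathtt P_m:\mathsf{Nat}$; (2) if $\gamma=\mathsf{Idx}$, $\mathrm{Comp}(B,\mathtt M,\kappa)$ holds iff for all such $\mathtt N_j,\mathtt P_i$, $\mathrm{Comp}(\emptyset,\mathtt M\overrightarrow{[\mathtt N/\mathtt x]}_1^n\mathtt P_1\cdots\mathtt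 P_m,\mathsf{Idx})$; (3) if $\gamma=\mathsf{Circ}(\mathtt E)$, $\mathrm{Comp}(B,\mathtt M,\kappa)$ holds iff for all such $\mathtt N_j,\mathtt P_i$, $\vdash\mathtt M\overrightarrow{[\mathtt N/\mathtt x]}_1^n\mathtt P_1\cdots\mathtt P_m:\mathsf{Circ}(\mathtt E\overrightarrow{[\mathtt N/\mathtt x]}_1^n\overrightarrow{[\mathtt P/\mathtt z]}_1^m)$ and $\mathrm{Comp}(\emptyset,\mathtt E\overrightarrow{[\mathtt N/\mathtt x]}_1^n\overrightarrow{[\mathtt P/\mathtt z]}_1^m,\mathsf{Idx})$.
   Context: qPCF. Gates: $\mathcal U=\bigcup_k\mathcal U(k)$, $\mathtt U\in\mathcal U(k)$ acts on $k+1$ qubits and denotes a unitary $\mathbf U$; $\ddagger$ is a fixed total arity-preserving map on gate names. Raw terms: $\mathtt{M},\mathtt{N},\mathtt{P},\mathtt{Q},\mathtt{E}::=\mathtt{x}\mid\lambda\mathtt{x}^\sigma.\mathtt{M}\mid\mathtt{M}\mathtt{N}\mid\underline{n}\mid\mathtt{pred}\mid\mathtt{succ}\mid\mathtt{if}\mid\mathtt{Y}_\sigma\mid\mathtt{set}\mid\mathtt{get}\mid\mathtt{U}\mid{::}\mid{\parallel}\mid\mathtt{iter}\mid\mathtt{reverse}\mid\odot\mathtt{E}\mathtt{E}'\ (\odot\in\{+,*\})\mid\mathtt{size}\mid\mathtt{dMeas}$, with infix $::$, $\parallel$, $+$. Types $\sigma::=\mathsf{Nat}\mid\mathsf{Idx}\mid\mathsf{Circ}(\mathtt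 E)\mid\Pi\mathtt x^\sigma.\tau$; $\sigma\to\tau$ is a non-dependent $\Pi$. Bases $B$: finite variable-to-type assignments with distinct variables; $B\cup\{\mathtt x:\sigma\}$ presupposes $\mathtt x\notin\mathrm{dom}(B)$; substitution on a base acts on its types. $\mathrm{sC}(B,\mathsf{Nat})=\mathrm{sC}(B,\mathsf{Idx})=\emptyset$, $\mathrm{sC}(B,\mathsf{Circ}(\mathtt E))=\{B\vdash\mathtt E:\mathsf{Idx}\}$, $\mathrm{sC}(B,\Pi\mathtt x^\sigma.\tau)=\mathrm{sC}(B,\sigma)\cup\mathrm{sC}(B\cup\{\mathtt x:\sigma\},\tau)$, extended to sets by union; $\mathrm{WF}(B,S)$ means all typings in $\mathrm{sC}(B,S)$ are derivable. Typing rules: (P0) $\mathrm{WF}(B,\mathrm{codom}(B)\cup\{\sigma\})\Rightarrow B\cup\{\mathtt x:\sigma\}\vdash\mathtt x:\sigma$; (P1) $B\cup\{\mathtt x:\sigma\}\vdash\mathtt N:\tau\Rightarrow B\vdash\lambda\mathtt x^\sigma.\mathtt N:\Pi\mathtt x^\sigma.\tau$; (P2) $B\vdash\mathtt P:\Pi\mathtt x^\sigma.\tau$, $B\vdash\mathtt Q:\sigma\Rightarrow B\vdash\mathtt{PQ}:\tau[\mathtt Q/\mathtt x]$; given $\mathrm{WF}(B,\mathrm{codom}(B))$: $\mathtt{succ},\mathtt{pred}:\mathsf{Nat}\to\mathsf{Nat}$, $\mathtt{if}:\mathsf{Nat}\to\mathsf{Nat}\to\mathsf{Nat}\to\mathsf{Nat}$,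 $\mathtt{get},\mathtt{set}:\mathsf{Nat}\to\mathsf{Nat}\to\mathsf{Nat}$, $\underline n:\mathsf{Idx}$, $\mathtt U:\mathsf{Circ}(\underline k)$ for $\mathtt U\in\mathcal U(k)$; (P5') $B\vdash\mathtt E:\mathsf{Idx}\Rightarrow B\vdash\mathtt{if}:\mathsf{Nat}\to\mathsf{Circ}(\mathtt E)\to\mathsf{Circ}(\mathtt E)\to\mathsf{Circ}(\mathtt E)$; (P6) $\sigma=\tau_1\to\cdots\to\tau_n\to\gamma$, $\gamma\in\{\mathsf{Nat},\mathsf{Circ}(\mathtt E)\}$, $\mathrm{WF}(B,\mathrm{codom}(B)\cup\{\sigma\})\Rightarrow B\vdash\mathtt Y_\sigma:(\sigma\to\sigma)\to\sigma$; (I0) $B\vdash\mathtt M:\mathsf{Idx}\Rightarrow B\vdash\mathtt M:\mathsf{Nat}$; (I2) $B\vdash\mathtt E_0,\mathtt E_1:\mathsf{Idx}\Rightarrow B\vdash\odot\mathtt E_0\mathtt E_1:\mathsf{Idx}$; (I3) $B\vdash\mathtt M:\mathsf{Circ}(\mathtt E)\Rightarrow B\vdash\mathtt{size}\,\mathtt M:\mathsf{Idx}$; given $B\vdash\mathtt E,\mathtt E_0,\mathtt E_1:\mathsf{Idx}$: ${::}:\mathsf{Circ}(\mathtt E)\to\mathsf{Circ}(\mathtt E)\to\mathsf{Circ}(\mathtt E)$, ${\parallel}:\mathsf{Circ}(\mathtt E_0)\to\mathsf{Circ}(\mathtt E_1)\to\mathsf{Circ}(\mathtt E_0+\mathtt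 E_1+\underline1)$, $\mathtt{reverse}:\mathsf{Circ}(\mathtt E)\to\mathsf{Circ}(\mathtt E)$, $\mathtt{iter}:\Pi\mathtt x^{\mathsf{Idx}}.\mathsf{Circ}(\mathtt E_0)\to\mathsf{Circ}(\mathtt E_1)\to\mathsf{Circ}(\mathtt E_0+((\underline1+\mathtt E_1)*\mathtt x))$, $\mathtt{dMeas}:\mathsf{Nat}\to\mathsf{Circ}(\mathtt E)\to\mathsf{Nat}$. Types are identified modulo $\alpha$, $\beta$-convertibility of terms in types, and ring laws of $+,*$ with $0,1$. Evaluation $\mathtt M\Downarrow^\alpha\mathtt V$ ($\mathtt M$ closed of ground type, $0<\alpha\le1$, $\mathtt V$ a numeral or a term built from gate names with $::,\parallel$) is the big-step call-by-name relation: $\underline n\Downarrow^1\underline n$; $\mathtt{succ}$/$\mathtt{pred}$ evaluate their argument and add/subtract one; $(\lambda\mathtt x.\mathtt M)\mathtt N\vec{\mathtt P}\Downarrow^\alpha\mathtt V$ if $\mathtt M[\mathtt N/\mathtt x]\vec{\mathtt P}\Downarrow^\alpha\mathtt V$; $\mathtt{if}\,\mathtt M\mathtt L\mathtt R\Downarrow^{\alpha\alpha'}\mathtt V$ if $\mathtt M\Downarrow^\alpha\underline0,\mathtt L\Downarrow^{\alpha'}\mathtt V$ or $\mathtt M\Downarrow^\alpha\underline{n+1},\mathtt R\Downarrow^{\alpha'}\mathtt V$; $\mathtt Y\mathtt M\vec{\mathtt P}\Downarrow^\alpha\mathtt V$ if $\mathtt M(\mathtt Y\mathtt M)\vec{\mathtt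 P}\Downarrow^\alpha\mathtt V$; $\mathtt{size}\,\mathtt M\Downarrow^\alpha\underline n$ if $\vdash\mathtt M:\mathsf{Circ}(\mathtt E)$ and $\mathtt E\Downarrow^\alpha\underline n$; $\odot\mathtt E_0\mathtt E_1\Downarrow^{\alpha\alpha'}\underline{m\odot n}$ if $\mathtt E_0\Downarrow^\alpha\underline m,\mathtt E_1\Downarrow^{\alpha'}\underline n$; $\mathtt{get}\,\mathtt M\mathtt N$ / $\mathtt{set}\,\mathtt M\mathtt N$ evaluate both arguments to $\underline m,\underline n$ (probabilities multiplied) and return the $n$-th binary digit of $m$ / $m$ with that digit set to $1$; $\mathtt U\Downarrow^\alpha\mathtt U$; $::$, $\parallel$ evaluate components ($\mathtt M_0\parallel\mathtt M_1\Downarrow\mathtt C_1\parallel\mathtt C_0$); $\mathtt{reverse}$ replaces gates by their $\ddagger$-image and reverses sequential order; $\mathtt{iter}\,\mathtt E\mathtt M_0\mathtt M_1\Downarrow\mathtt C_1\parallel\cdots\parallel\mathtt C_1\parallel\mathtt C_0$ ($n$ copies, $\mathtt E\Downarrow\underline n$); $\mathtt{dMeas}\,\mathtt M\mathtt N\Downarrow^{\alpha\alpha'\alpha''}\underline n$ if $\mathtt M\Downarrow^\alpha\underline m$, $\mathtt N\Downarrow^{\alpha'}\mathtt C$, $\vdash\mathtt N:\mathsf{Circ}(\underline k)$ and $\underline n$ is a measurement outcome of the circuit $\mathtt C$ on input $m$ with probability $\alpha''$. Definition of Comp: $\mathrm{Comp}(B,\mathtt M,\sigma)$ holds iff $B\vdash\mathtt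 M:\sigma$ is derivable and one of: (i) $B=\emptyset$, $\sigma=\mathsf{Nat}$; (ii) $B=\emptyset$, $\sigma=\mathsf{Idx}$ and $\mathtt M\Downarrow^1\underline n$ for some $n$; (iii) $B=\emptyset$, $\sigma=\mathsf{Circ}(\mathtt E)$ and $\mathrm{Comp}(\emptyset,\mathtt E,\mathsf{Idx})$; (iv) $B=\emptyset$, $\sigma=\Pi\mathtt x^\mu.\tau$ and $\mathrm{Comp}(\emptyset,\mathtt{MN},\tau[\mathtt N/\mathtt x])$ for all $\mathtt N$ with $\mathrm{Comp}(\emptyset,\mathtt N,\mu)$; (v) $B=\{\mathtt x:\nu\}\cup B'$ and $\mathrm{Comp}(B'[\mathtt N/\mathtt x],\mathtt M[\mathtt N/\mathtt x],\sigma[\mathtt N/\mathtt x])$ for all $\mathtt N$ with $\mathrm{Comp}(\emptyset,\mathtt N,\nu)$. *)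

From Stdlib Require Import Reals List Arith PeanoNat Bool.
From Coquelicot Require Import Complex.
Import ListNotations.
Set Implicit Arguments.

(* Gate signature: gate names, arity (U in U(k) acts on k+1 qubits),
   the fixed arity-preserving map ‡, and the unitary denoted by a gate
   (a 2^(k+1) x 2^(k+1) matrix, given by its entries).                 *)

Definition csum (d : nat) (f : nat -> C) : C :=
  fold_right Cplus (RtoC 0) (map f (seq 0 d)).

Definition is_unitary (d : nat) (U : nat -> nat -> C) : Prop :=
  forall i j, i < d -> j < d ->
    csum d (fun l => Cmult (Cconj (U l i)) (U l j))
    = (if Nat.eqb i j then RtoC 1 else RtoC 0).

Record gate_sig := {
  gname : Type;
  garity : gname -> nat;
  gdag : gname -> gname;
  gdag_arity : forall g, garity (gdag g) = garity g;
  gmat : gname -> nat -> nat -> C;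
  gmat_unitary : forall g, is_unitary (2 ^ (garity g + 1)) (gmat g)
}.

Section Syntax.
Variable G : Type.

Inductive term : Type :=
| Var : nat -> term
| Lam : ty -> term -> term
| App : term -> term -> term
| Num : nat -> term
| Pred : term
| Succ : term
| If : term
| Yc : ty -> term
| SetB : term
| GetB : term
| Gate : G -> term
| Seq : term
| Par : term
| Iter : term
| Rev : term
| Plus : term -> term -> term
| Times : term -> term -> term
| Size : term
| DMeas : term
with ty : Type :=
| TNat : ty
| TIdx : ty
| TCirc : term -> ty
| TPi : ty -> ty -> ty.

Fixpoint lift_tm (d c : nat) (t : term) : term :=
  match t with
  | Var i => if Nat.ltb i c then Var i else Var (i + d)
  | Lam s M => Lam (lift_ty d c s) (lift_tm d (S c) M)
  | App M N => App (lift_tm d c M) (lift_tm d c N)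
  | Yc s => Yc (lift_ty d c s)
  | Plus a b => Plus (lift_tm d c a) (lift_tm d c b)
  | Times a b => Times (lift_tm d c a) (lift_tm d c b)
  | t => t
  end
with lift_ty (d c : nat) (s : ty) : ty :=
  match s with
  | TNat => TNat
  | TIdx => TIdx
  | TCirc E => TCirc (lift_tm d c E)
  | TPi a b => TPi (lift_ty d c a) (lift_ty d (S c) b)
  end.

Fixpoint subst_tm (k : nat) (N : term) (t : term) : term :=
  match t with
  | Var i => if Nat.ltb i k then Var i
             else if Nat.eqb i k then N else Var (i - 1)
  | Lam s M => Lam (subst_ty k N s) (subst_tm (S k) (lift_tm 1 0 N) M)
  | App M P => App (subst_tm k N M) (subst_tm k N P)
  | Yc s => Yc (subst_ty k N s)
  | Plus a b => Plus (subst_tm k N a) (subst_tm k N b)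
  | Times a b => Times (subst_tm k N a) (subst_tm k N b)
  | t => t
  end
with subst_ty (k : nat) (N : term) (s : ty) : ty :=
  match s with
  | TNat => TNat
  | TIdx => TIdx
  | TCirc E => TCirc (subst_tm k N E)
  | TPi a b => TPi (subst_ty k N a) (subst_ty (S k) (lift_tm 1 0 N) b)
  end.

Definition arr (a b : ty) : ty := TPi a (lift_ty 1 0 b).

Fixpoint arrs (ts : list ty) (g : ty) : ty :=
  match ts with [] => g | t :: ts' => arr t (arrs ts' g) end.

Fixpoint piN (ts : list ty) (g : ty) : ty :=
  match ts with [] => g | t :: ts' => TPi t (piN ts' g) end.

Fixpoint apps (M : term) (Ps : list term) : term :=
  match Ps with [] => M | P :: Ps' => apps (App M P) Ps' end.

Inductive teq : term -> term -> Prop :=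
| teq_refl : forall t, teq t t
| teq_sym : forall t u, teq t u -> teq u t
| teq_trans : forall t u v, teq t u -> teq u v -> teq t v
| teq_beta : forall s M N, teq (App (Lam s M) N) (subst_tm 0 N M)
| teq_lam : forall s s' M M', tyeq s s' -> teq M M' -> teq (Lam s M) (Lam s' M')
| teq_app : forall M M' N N', teq M M' -> teq N N' -> teq (App M N) (App M' N')
| teq_Y : forall s s', tyeq s s' -> teq (Yc s) (Yc s')
| teq_plus : forall a a' b b', teq a a' -> teq b b' -> teq (Plus a b) (Plus a' b')
| teq_times : forall a a' b b', teq a a' -> teq b b' -> teq (Times a b) (Times a' b')
| teq_plusC : forall a b, teq (Plus a b) (Plus b a)
| teq_plusA : forall a b c, teq (Plus (Plus a b) c) (Plus a (Plus b c))
| teq_plus0 : forall a, teq (Plus (Num 0) a) a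
| teq_timesC : forall a b, teq (Times a b) (Times b a)
| teq_timesA : forall a b c, teq (Times (Times a b) c) (Times a (Times b c))
| teq_times1 : forall a, teq (Times (Num 1) a) a
| teq_times0 : forall a, teq (Times (Num 0) a) (Num 0)
| teq_distr : forall a b c, teq (Times a (Plus b c)) (Plus (Times a b) (Times a c))
| teq_plusN : forall m n, teq (Plus (Num m) (Num n)) (Num (m + n))
| teq_timesN : forall m n, teq (Times (Num m) (Num n)) (Num (m * n))
with tyeq : ty -> ty -> Prop :=
| tyeq_refl : forall s, tyeq s s
| tyeq_sym : forall s s', tyeq s s' -> tyeq s' s
| tyeq_trans : forall s s' s'', tyeq s s' -> tyeq s' s'' -> tyeq s s''
| tyeq_circ : forall E E', teq E E' -> tyeq (TCirc E) (TCirc E')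
| tyeq_pi : forall a a' b b', tyeq a a' -> tyeq b b' -> tyeq (TPi a b) (TPi a' b').

(* side conditions sC(B, sigma): judgements B |- E : Idx required *)
Fixpoint sC (Γ : list ty) (s : ty) : list (list ty * term) :=
  match s with
  | TNat => []
  | TIdx => []
  | TCirc E => [(Γ, E)]
  | TPi a b => sC Γ a ++ sC (a :: Γ) b
  end.

End Syntax.

Arguments Var {G}. Arguments Num {G}. Arguments Pred {G}. Arguments Succ {G}.
Arguments If {G}. Arguments SetB {G}. Arguments GetB {G}. Arguments Seq {G}.
Arguments Par {G}. Arguments Iter {G}. Arguments Rev {G}. Arguments Size {G}.
Arguments DMeas {G}. Arguments TNat {G}. Arguments TIdx {G}.

(* Typing.  Contexts are lists of types, head = innermost variable
   (Var 0); entry i is a type in the context skipn (S i) Γ.            *)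

Section Typing.
Variable gs : gate_sig.
Notation tm := (term (gname gs)).
Notation typ_ := (ty (gname gs)).

Inductive typ : list typ_ -> tm -> typ_ -> Prop :=
| t_var : forall Γ i a,
    nth_error Γ i = Some a ->
    (forall j b, nth_error Γ j = Some b ->
       forall p, In p (sC (skipn (S j) Γ) b) -> typ (fst p) (snd p) TIdx) ->
    typ Γ (Var i) (lift_ty (S i) 0 a)
| t_lam : forall Γ s N t, typ (s :: Γ) N t -> typ Γ (Lam s N) (TPi s t)
| t_app : forall Γ P Q s t, typ Γ P (TPi s t) -> typ Γ Q s ->
    typ Γ (App P Q) (subst_ty 0 Q t)
| t_const : forall Γ c s,
    (forall j b, nth_error Γ j = Some b ->
       forall p, In p (sC (skipn (S j) Γ) b) -> typ (fst p) (snd p) TIdx) ->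
    (  (c = Succ /\ s = arr TNat TNat)
    \/ (c = Pred /\ s = arr TNat TNat)
    \/ (c = If /\ s = arr TNat (arr TNat (arr TNat TNat)))
    \/ (c = GetB /\ s = arr TNat (arr TNat TNat))
    \/ (c = SetB /\ s = arr TNat (arr TNat TNat))
    \/ (exists n, c = Num n /\ s = TIdx)
    \/ (exists g, c = Gate g /\ s = TCirc (Num (garity gs g)))) ->
    typ Γ c s
| t_ifc : forall Γ E, typ Γ E TIdx ->
    typ Γ If (arr TNat (arr (TCirc E) (arr (TCirc E) (TCirc E))))
| t_Y : forall Γ s ts g,
    tyeq s (arrs ts g) ->
    (g = TNat \/ exists E, g = TCirc E) ->
    (forall j b, nth_error Γ j = Some b ->
       forall p, In p (sC (skipn (S j) Γ) b) -> typ (fst p) (snd p) TIdx) ->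
    (forall p, In p (sC Γ s) -> typ (fst p) (snd p) TIdx) ->
    typ Γ (Yc s) (arr (arr s s) s)
| t_idx_nat : forall Γ M, typ Γ M TIdx -> typ Γ M TNat
| t_plus : forall Γ E0 E1, typ Γ E0 TIdx -> typ Γ E1 TIdx -> typ Γ (Plus E0 E1) TIdx
| t_times : forall Γ E0 E1, typ Γ E0 TIdx -> typ Γ E1 TIdx -> typ Γ (Times E0 E1) TIdx
| t_size : forall Γ M E, typ Γ M (TCirc E) -> typ Γ (App Size M) TIdx
| t_seq : forall Γ E, typ Γ E TIdx ->
    typ Γ Seq (arr (TCirc E) (arr (TCirc E) (TCirc E)))
| t_par : forall Γ E0 E1, typ Γ E0 TIdx -> typ Γ E1 TIdx ->
    typ Γ Par (arr (TCirc E0) (arr (TCirc E1) (TCirc (Plus (Plus E0 E1) (Num 1)))))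
| t_rev : forall Γ E, typ Γ E TIdx -> typ Γ Rev (arr (TCirc E) (TCirc E))
| t_iter : forall Γ E0 E1, typ Γ E0 TIdx -> typ Γ E1 TIdx ->
    typ Γ Iter
      (TPi TIdx (arr (TCirc (lift_tm 1 0 E0))
                   (arr (TCirc (lift_tm 1 0 E1))
                        (TCirc (Plus (lift_tm 1 0 E0)
                                     (Times (Plus (Num 1) (lift_tm 1 0 E1)) (Var 0)))))))
| t_dmeas : forall Γ E, typ Γ E TIdx ->
    typ Γ DMeas (arr TNat (arr (TCirc E) TNat))
| t_conv : forall Γ M s s', typ Γ M s -> tyeq s s' -> typ Γ M s'.

Fixpoint cwidth (c : tm) : nat :=
  match c with
  | Gate g => garity gs g
  | App (App Seq c0) _ => cwidth c0
  | App (App Par c0) c1 => cwidth c0 + cwidth c1 + 1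
  | _ => 0
  end.

(* matrix (by entries) denoted by a circuit value; C0 :: C1 runs C0
   first; C0 || C1 is the Kronecker product (C0 on the high qubits) *)
Fixpoint cden (c : tm) : nat -> nat -> C :=
  match c with
  | Gate g => gmat gs g
  | App (App Seq c0) c1 => fun i j =>
      csum (2 ^ (cwidth c0 + 1)) (fun l => Cmult (cden c1 i l) (cden c0 l j))
  | App (App Par c0) c1 => fun i j =>
      let d := 2 ^ (cwidth c1 + 1) in
      Cmult (cden c0 (i / d) (j / d)) (cden c1 (i mod d) (j mod d))
  | _ => fun _ _ => RtoC 0
  end.

(* probability of outcome n when measuring circuit c on k+1 qubits,
   run on computational basis input m *)
Definition meas_prob (c : tm) (k m n : nat) : R :=
  if Nat.ltb m (2 ^ (k + 1)) && Nat.ltb n (2 ^ (k + 1))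
  then (Cmod (cden c n m) ^ 2)%R else 0%R.

Fixpoint crev (c : tm) : tm :=
  match c with
  | Gate g => Gate (gdag gs g)
  | App (App Seq c0) c1 => App (App Seq (crev c1)) (crev c0)
  | App (App Par c0) c1 => App (App Par (crev c0)) (crev c1)
  | c => c
  end.

Fixpoint citer (n : nat) (c1 c0 : tm) : tm :=
  match n with
  | 0 => c0
  | S n' => App (App Par c1) (citer n' c1 c0)
  end.

Inductive eval : tm -> R -> tm -> Prop :=
| ev_num : forall n, eval (Num n) 1%R (Num n)
| ev_succ : forall M a n, eval M a (Num n) -> eval (App Succ M) a (Num (S n))
| ev_pred : forall M a n, eval M a (Num n) -> eval (App Pred M) a (Num (Nat.pred n))
| ev_beta : forall s M N Ps a V,
    eval (apps (subst_tm 0 N M) Ps) a V ->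
    eval (apps (App (Lam s M) N) Ps) a V
| ev_if0 : forall M L Rr a a' V,
    eval M a (Num 0) -> eval L a' V ->
    eval (App (App (App If M) L) Rr) (a * a')%R V
| ev_ifS : forall M L Rr a a' n V,
    eval M a (Num (S n)) -> eval Rr a' V ->
    eval (App (App (App If M) L) Rr) (a * a')%R V
| ev_Y : forall s M Ps a V,
    eval (apps (App M (App (Yc s) M)) Ps) a V ->
    eval (apps (App (Yc s) M) Ps) a V
| ev_size : forall M E a n,
    typ [] M (TCirc E) -> eval E a (Num n) -> eval (App Size M) a (Num n)
| ev_plus : forall E0 E1 a a' m n,
    eval E0 a (Num m) -> eval E1 a' (Num n) ->
    eval (Plus E0 E1) (a * a')%R (Num (m + n))
| ev_times : forall E0 E1 a a' m n,
    eval E0 a (Num m) -> eval E1 a' (Num n) ->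
    eval (Times E0 E1) (a * a')%R (Num (m * n))
| ev_get : forall M N a a' m n,
    eval M a (Num m) -> eval N a' (Num n) ->
    eval (App (App GetB M) N) (a * a')%R (Num (Nat.b2n (Nat.testbit m n)))
| ev_set : forall M N a a' m n,
    eval M a (Num m) -> eval N a' (Num n) ->
    eval (App (App SetB M) N) (a * a')%R (Num (Nat.setbit m n))
| ev_gate : forall g, eval (Gate g) 1%R (Gate g)
| ev_seq : forall M0 M1 a a' C0 C1,
    eval M0 a C0 -> eval M1 a' C1 ->
    eval (App (App Seq M0) M1) (a * a')%R (App (App Seq C0) C1)
| ev_par : forall M0 M1 a a' C0 C1,
    eval M0 a C0 -> eval M1 a' C1 ->
    eval (App (App Par M0) M1) (a * a')%R (App (App Par C1) C0)
| ev_rev : forall M a C0, eval M a C0 -> eval (App Rev M) a (crev C0)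
| ev_iter : forall E M0 M1 a a' a'' n C0 C1,
    eval E a (Num n) -> eval M0 a' C0 -> eval M1 a'' C1 ->
    eval (App (App (App Iter E) M0) M1) (a * a' * a'')%R (citer n C1 C0)
| ev_dmeas : forall M N a a' a'' m k n C0,
    eval M a (Num m) -> eval N a' C0 -> typ [] N (TCirc (Num k)) ->
    a'' = meas_prob C0 k m n -> (0 < a'')%R ->
    eval (App (App DMeas M) N) (a * a' * a'')%R (Num n).

Fixpoint tsize (s : typ_) : nat :=
  match s with
  | TNat => 1
  | TIdx => 1
  | TCirc _ => 2
  | TPi a b => S (tsize a + tsize b)
  end.

(* Comp(∅, M, σ), by recursion on a fuel bounded below by the size of
   the type skeleton (substitution does not change the skeleton). *)
Fixpoint compF (k : nat) (M : tm) (s : typ_) : Prop :=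
  match k with
  | 0 => False
  | S k' =>
      typ [] M s /\
      match s with
      | TNat => True
      | TIdx => exists n, eval M 1%R (Num n)
      | TCirc E => compF k' E TIdx
      | TPi a b => forall N, compF k' N a -> compF k' (App M N) (subst_ty 0 N b)
      end
  end.

Definition Comp0 (M : tm) (s : typ_) : Prop := compF (tsize s) M s.

(* substitute the closed N for the outermost variable x1 in the types
   of the remaining base entries [ν2; ...; νn] (νj is in context
   x1..x_{j-1}, where x1 has index j-2) *)
Fixpoint subst_base (k : nat) (N : tm) (l : list typ_) : list typ_ :=
  match l with
  | [] => []
  | a :: l' => subst_ty k N a :: subst_base (S k) N l'
  end.

(* Comp(B, M, σ) with B = [x1:ν1; ...; xn:νn] written in PAPER order
   (x1 outermost); the typing context is rev B.  Recursion on a fuel k = length B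
   (subst_base preserves length). *)
Fixpoint CompF (k : nat) (B : list typ_) (M : tm) (s : typ_) {struct k} : Prop :=
  match B with
  | [] => Comp0 M s
  | a :: B' =>
      match k with
      | O => False
      | S k' =>
          typ (rev B) M s /\
          (forall N, Comp0 N a ->
             CompF k' (subst_base 0 N B') (subst_tm (length B') N M)
                   (subst_ty (length B') N s))
      end
  end.

Definition Comp (B : list typ_) (M : tm) (s : typ_) : Prop :=
  CompF (length B) B M s.

(* Q[N1/x1]...[Nk/xk] for Q living in a context of length L whose k
   outermost variables are x1 (outermost), ..., xk. *)
Fixpoint osubst_tm (L : nat) (Ns : list tm) (t : tm) : tm :=
  match Ns with
  | [] => t
  | N :: Ns' => osubst_tm (L - 1) Ns' (subst_tm (L - 1) N t)
  end.

Fixpoint osubst_ty (L : nat) (Ns : list tm) (t : typ_) : typ_ :=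
  match Ns with
  | [] => t
  | N :: Ns' => osubst_ty (L - 1) Ns' (subst_ty (L - 1) N t)
  end.

Definition adm_N (B : list typ_) (Ns : list tm) : Prop :=
  length Ns = length B /\
  forall j, j < length B ->
    Comp0 (nth j Ns (Num 0)) (osubst_ty j (firstn j Ns) (nth j B TNat)).

Definition adm_P (B : list typ_) (Ns : list tm) (taus : list typ_) (Ps : list tm) : Prop :=
  length Ps = length taus /\
  forall i, i < length taus ->
    Comp0 (nth i Ps (Num 0))
          (osubst_ty (length B + i) (Ns ++ firstn i Ps) (nth i taus TNat)).

End Typing.

(* Comp(B, M, kappa) is built clause by clause: clause (v) replaces the
   outermost base variable by a computable closed term, clause (iv) applies
   M to a computable argument.  Unfolding the n clauses (v) and then the m
   clauses (iv), each time by induction along a telescope whose later types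
   get instantiated by the earlier terms, leaves exactly the ground clause on
   the right-hand side.  Every clause also carries a typing conjunct; it holds
   automatically because substituting a closed well-typed term for the
   outermost variable preserves typing, the one genuinely syntactic fact
   needed. *)

From Stdlib Require Import List Arith Lia.
Import ListNotations.

Scheme term_mut := Induction for term Sort Prop
  with ty_mut := Induction for ty Sort Prop.
Combined Scheme term_ty_mut from term_mut, ty_mut.
Scheme teq_mut := Induction for teq Sort Prop
  with tyeq_mut := Induction for tyeq Sort Prop.
Combined Scheme teq_tyeq_mut from teq_mut, tyeq_mut.

Ltac case_index := repeat match goal with
  | |- context [Nat.ltb ?a ?b] => destruct (Nat.ltb_spec a b)
  | |- context [Nat.eqb ?a ?b] => destruct (Nat.eqb_spec a b)
  end.

Lemma and_forall_iff (A : Prop) {T} (C D E : T -> Prop) :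
  A -> (forall x, C x -> (D x <-> E x)) ->
  ((A /\ forall x, C x -> D x) <-> (forall x, C x -> E x)).
Proof.
  intros HA HDE.
  split; [intros [_ H] | intros H; split; auto]; intros x Hx; apply HDE; auto.
Qed.

Section Syntax.
Context {G : Type}.

Fixpoint scoped_tm (n : nat) (t : term G) : Prop :=
  match t with
  | Var i => i < n
  | Lam s M => scoped_ty n s /\ scoped_tm (S n) M
  | App M N => scoped_tm n M /\ scoped_tm n N
  | Yc s => scoped_ty n s
  | Plus a b => scoped_tm n a /\ scoped_tm n b
  | Times a b => scoped_tm n a /\ scoped_tm n b
  | _ => True
  end
with scoped_ty (n : nat) (s : ty G) : Prop :=
  match s with
  | TCirc E => scoped_tm n E
  | TPi a b => scoped_ty n a /\ scoped_ty (S n) b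
  | _ => True
  end.

Lemma lift_scoped_id :
  (forall t n c d, scoped_tm n t -> n <= c -> lift_tm d c t = t) /\
  (forall s n c d, scoped_ty n s -> n <= c -> lift_ty d c s = s).
Proof.
  apply term_ty_mut; intros; simpl in *; try reflexivity;
  repeat match goal with H : _ /\ _ |- _ => destruct H end;
  try (case_index; try reflexivity; lia);
  f_equal; eauto; eapply H0; eauto; lia.
Qed.

Lemma subst_scoped_id :
  (forall t n k N, scoped_tm n t -> n <= k -> subst_tm k N t = t) /\
  (forall s n k N, scoped_ty n s -> n <= k -> subst_ty k N s = s).
Proof.
  apply term_ty_mut; intros; simpl in *; try reflexivity;
  repeat match goal with H : _ /\ _ |- _ => destruct H end;
  try (case_index; try reflexivity; lia);
  f_equal; eauto; eapply H0; eauto; lia.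
Qed.

Lemma lift_tm_closed (N : term G) d c : scoped_tm 0 N -> lift_tm d c N = N.
Proof. intros; eapply (proj1 lift_scoped_id); eauto; lia. Qed.

Lemma lift_ty_closed (s : ty G) d c : scoped_ty 0 s -> lift_ty d c s = s.
Proof. intros; eapply (proj2 lift_scoped_id); eauto; lia. Qed.

Lemma subst_ty_closed (s : ty G) k N : scoped_ty 0 s -> subst_ty k N s = s.
Proof. intros; eapply (proj2 subst_scoped_id); eauto; lia. Qed.

Section ClosedSubstituend.
Variable N : term G.
Hypothesis N_closed : scoped_tm 0 N.

Lemma subst_lift_comm :
  (forall t c d k, c <= k ->
     subst_tm (k + d) N (lift_tm d c t) = lift_tm d c (subst_tm k N t)) /\
  (forall s c d k, c <= k ->
     subst_ty (k + d) N (lift_ty d c s) = lift_ty d c (subst_ty k N s)).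
Proof.
  apply term_ty_mut; intros; simpl in *; try reflexivity;
  rewrite ?(lift_tm_closed N 1 0 N_closed); try (f_equal; eauto; fail).
  - case_index; simpl; case_index; try lia; try reflexivity.
    + rewrite lift_tm_closed; auto.
    + f_equal; lia.
  - f_equal; eauto. apply (H0 (S c) d (S k)); lia.
  - f_equal; eauto. apply (H0 (S c) d (S k)); lia.
Qed.

Lemma subst_lift1_tm t k :
  subst_tm (S k) N (lift_tm 1 0 t) = lift_tm 1 0 (subst_tm k N t).
Proof. rewrite <- Nat.add_1_r. apply subst_lift_comm; lia. Qed.

Lemma subst_lift1_ty s k :
  subst_ty (S k) N (lift_ty 1 0 s) = lift_ty 1 0 (subst_ty k N s).
Proof. rewrite <- Nat.add_1_r. apply subst_lift_comm; lia. Qed.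

Lemma subst_subst_comm :
  (forall t Q c k, subst_tm (c + k) N (subst_tm c Q t) =
     subst_tm c (subst_tm (c + k) N Q) (subst_tm (S (c + k)) N t)) /\
  (forall s Q c k, subst_ty (c + k) N (subst_ty c Q s) =
     subst_ty c (subst_tm (c + k) N Q) (subst_ty (S (c + k)) N s)).
Proof.
  apply term_ty_mut; intros; simpl in *; try reflexivity;
  rewrite ?(lift_tm_closed N 1 0 N_closed); try (f_equal; eauto; fail).
  all: lazymatch goal with
    | |- Lam _ _ = _ => idtac
    | |- TPi _ _ = _ => idtac
    | _ => case_index; simpl; case_index; try lia; try reflexivity;
             first [rewrite (proj1 subst_scoped_id N 0); auto; lia | f_equal; lia]
    end.
  all: f_equal; [apply H|];
    specialize (H0 (lift_tm 1 0 Q) (S c) k); simpl in H0;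
    rewrite H0, subst_lift1_tm; reflexivity.
Qed.

Lemma subst_conv :
  (forall t u, teq t u -> forall k, teq (subst_tm k N t) (subst_tm k N u)) /\
  (forall s s', tyeq s s' -> forall k, tyeq (subst_ty k N s) (subst_ty k N s')).
Proof.
  apply teq_tyeq_mut; intros; simpl in *; rewrite ?(lift_tm_closed N 1 0 N_closed);
  try (econstructor; eauto; fail).
  pose proof (proj1 subst_subst_comm M N0 0 k) as E; simpl in E.
  rewrite E. apply teq_beta.
Qed.

Lemma subst_arr k (a b : ty G) :
  subst_ty k N (arr a b) = arr (subst_ty k N a) (subst_ty k N b).
Proof. unfold arr; simpl. rewrite lift_tm_closed, subst_lift1_ty; auto. Qed.

Lemma subst_arrs k ts (g : ty G) :
  subst_ty k N (arrs ts g) = arrs (map (subst_ty k N) ts) (subst_ty k N g).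
Proof. induction ts; cbn [arrs map]; auto. rewrite subst_arr, IHts; auto. Qed.

End ClosedSubstituend.

(* Entry [a] of a context sees only the entries after it, so the variable
   at depth [k] below the whole context is [Var (k + length Γ')] in [a]. *)
Fixpoint subst_ctx (k : nat) (N : term G) (Γ : list (ty G)) : list (ty G) :=
  match Γ with
  | [] => []
  | a :: Γ' => subst_ty (k + length Γ') N a :: subst_ctx k N Γ'
  end.

Lemma subst_ctx_snoc k N Γ a :
  subst_ctx k N (Γ ++ [a]) = subst_ctx (S k) N Γ ++ [subst_ty k N a].
Proof.
  induction Γ as [|b Γ IH]; simpl. rewrite Nat.add_0_r; auto.
  rewrite IH, length_app, Nat.add_1_r, Nat.add_succ_r. reflexivity.
Qed.

Lemma nth_error_subst_ctx N Γ j b' :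
  nth_error (subst_ctx 0 N Γ) j = Some b' <->
  exists b, nth_error Γ j = Some b /\ b' = subst_ty (length Γ - S j) N b.
Proof.
  revert j; induction Γ; intros j; destruct j; simpl.
  - split; [discriminate | intros (b & [=] & _)].
  - split; [discriminate | intros (b & [=] & _)].
  - split; [intros [= <-]; exists a; split; auto | intros (b & [= <-] & ->)];
      repeat f_equal; lia.
  - apply IHΓ.
Qed.

Lemma skipn_subst_ctx N n Γ : skipn n (subst_ctx 0 N Γ) = subst_ctx 0 N (skipn n Γ).
Proof. revert Γ; induction n; intros [|a Γ]; simpl; auto. Qed.

Lemma sC_app (X Δ : list (ty G)) s :
  sC (X ++ Δ) s = map (fun p => (fst p ++ Δ, snd p)) (sC X s).
Proof.
  revert X; induction s; intros X; simpl; auto.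
  rewrite map_app, IHs1. f_equal. apply (IHs2 (s1 :: X)).
Qed.

Lemma sC_subst N (ν : ty G) : scoped_tm 0 N ->
  forall s X p', In p' (sC (subst_ctx 0 N X) (subst_ty (length X) N s)) ->
  exists Y E, In (Y ++ X ++ [ν], E) (sC (X ++ [ν]) s) /\
              p' = (subst_ctx 0 N (Y ++ X), subst_tm (length (Y ++ X)) N E).
Proof.
  intros HN s. induction s; intros X p' Hp; simpl in *; try contradiction.
  - destruct Hp as [<-|[]]. exists [], t. simpl. auto.
  - rewrite (lift_tm_closed N 1 0 HN) in Hp.
    apply in_app_or in Hp as [Hp|Hp].
    + destruct (IHs1 X p' Hp) as (Y & E & H1 & H2). exists Y, E.
      split; auto. apply in_or_app; auto.
    + destruct (IHs2 (s1 :: X) p' Hp) as (Y & E & H1 & H2).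
      exists (Y ++ [s1]), E. rewrite <- !app_assoc. simpl. split; auto.
      apply in_or_app; auto.
Qed.

End Syntax.

Section Typing.
Context {gs : gate_sig}.
Notation tm := (term (gname gs)).
Notation tp := (ty (gname gs)).

(* The premise WF(Γ, codom Γ) of the typing rules. *)
Definition ctx_ok (Γ : list tp) : Prop :=
  forall j b, nth_error Γ j = Some b ->
    forall p, In p (sC (skipn (S j) Γ) b) -> typ gs (fst p) (snd p) TIdx.

Lemma ctx_ok_app (Γ Δ : list tp) :
  (forall j b, nth_error Γ j = Some b -> forall p, In p (sC (skipn (S j) Γ) b) ->
     forall Δ, ctx_ok Δ -> typ gs (fst p ++ Δ) (snd p) TIdx) ->
  ctx_ok Δ -> ctx_ok (Γ ++ Δ).
Proof.
  intros H HΔ j b Hj p Hp.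
  destruct (Nat.lt_ge_cases j (length Γ)) as [Hlt|Hge].
  - rewrite nth_error_app1 in Hj by auto.
    rewrite skipn_app, (proj2 (Nat.sub_0_le (S j) (length Γ)) Hlt), skipn_O, sC_app in Hp.
    apply in_map_iff in Hp as (p0 & <- & Hp0). simpl. eapply H; eauto.
  - rewrite nth_error_app2 in Hj by auto.
    rewrite skipn_app, skipn_all2, app_nil_l, Nat.sub_succ_l in Hp by lia.
    exact (HΔ _ _ Hj p Hp).
Qed.

(* Appending at the outer end of a context shifts no de Bruijn index. *)
Lemma typ_weaken {Γ M s} : typ gs Γ M s -> forall Δ, ctx_ok Δ -> typ gs (Γ ++ Δ) M s.
Proof.
  induction 1; intros Δ HΔ; try (econstructor; eauto; fail).
  - apply t_var. rewrite nth_error_app1; auto. apply nth_error_Some; congruence.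
    apply ctx_ok_app; eauto.
  - apply t_const; auto. apply ctx_ok_app; eauto.
  - eapply t_Y; eauto. apply ctx_ok_app; eauto.
    intros p Hp. rewrite sC_app in Hp. apply in_map_iff in Hp as (p0 & <- & Hp0).
    simpl. eauto.
Qed.

Definition ctx_scoped (Γ : list tp) : Prop :=
  forall j b, nth_error Γ j = Some b -> scoped_ty (length Γ - S j) b.

Lemma scoped_of_sC (s : tp) X :
  (forall p, In p (sC X s) -> scoped_tm (length (fst p)) (snd p)) -> scoped_ty (length X) s.
Proof.
  revert X; induction s; intros X H; simpl in *; auto.
  - apply (H (X, t)); auto.
  - split; [apply IHs1 | apply (IHs2 (s1 :: X))];
      intros; apply H; apply in_or_app; auto.
Qed.

Lemma ctx_scoped_of_sC (Γ : list tp) :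
  (forall j b, nth_error Γ j = Some b -> forall p, In p (sC (skipn (S j) Γ) b) ->
     scoped_tm (length (fst p)) (snd p) /\ ctx_scoped (fst p)) -> ctx_scoped Γ.
Proof.
  intros H j b Hj. rewrite <- length_skipn. apply scoped_of_sC.
  intros p Hp. apply (H j b Hj p Hp).
Qed.

Lemma typ_scoped {Γ M s} : typ gs Γ M s -> scoped_tm (length Γ) M /\ ctx_scoped Γ.
Proof.
  induction 1; simpl; try (split; [auto | apply ctx_scoped_of_sC; auto]; fail);
  repeat match goal with H : _ /\ _ |- _ => destruct H end; try (split; auto; fail).
  - split. apply nth_error_Some; congruence. apply ctx_scoped_of_sC; auto.
  - split. split; auto. specialize (H1 0 s eq_refl). simpl in H1.
    rewrite Nat.sub_0_r in H1. auto.
    intros j b Hj. exact (H1 (S j) b Hj).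
  - split; [|apply ctx_scoped_of_sC; auto].
    destruct H1 as [[-> _]|[[-> _]|[[-> _]|[[-> _]|[[-> _]|[(n&->&_)|(g&->&_)]]]]]];
      simpl; auto.
  - split; [|apply ctx_scoped_of_sC; auto]. simpl. apply scoped_of_sC. intros. apply H4; auto.
Qed.

Section SubstOuter.
Variables (N : tm) (ν : tp).
Hypothesis N_typ : typ gs [] N ν.
Hypothesis ν_closed : scoped_ty 0 ν.

Let N_closed : scoped_tm 0 N := proj1 (typ_scoped N_typ).

Lemma ctx_ok_subst (Γ : list tp) :
  (forall j b, nth_error (Γ ++ [ν]) j = Some b ->
     forall p, In p (sC (skipn (S j) (Γ ++ [ν])) b) ->
     forall Γ', fst p = Γ' ++ [ν] ->
       typ gs (subst_ctx 0 N Γ') (subst_tm (length Γ') N (snd p)) TIdx) ->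
  ctx_ok (subst_ctx 0 N Γ).
Proof.
  intros H j b' Hj p' Hp'.
  apply nth_error_subst_ctx in Hj as (b & Hb & ->).
  assert (Hjl : j < length Γ) by (apply nth_error_Some; congruence).
  rewrite skipn_subst_ctx, <- length_skipn in Hp'.
  destruct (sC_subst N ν N_closed b _ _ Hp') as (Y & E & HY & ->).
  assert (Hsk : skipn (S j) (Γ ++ [ν]) = skipn (S j) Γ ++ [ν]).
  { rewrite skipn_app, (proj2 (Nat.sub_0_le (S j) (length Γ)) Hjl). reflexivity. }
  assert (Hn : nth_error (Γ ++ [ν]) j = Some b) by (rewrite nth_error_app1; auto).
  pose proof (H j b Hn) as H'. rewrite Hsk in H'.
  exact (H' _ HY (Y ++ skipn (S j) Γ) (app_assoc _ _ _)).
Qed.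

Lemma typ_subst_var Γ i a : nth_error (Γ ++ [ν]) i = Some a ->
  ctx_ok (subst_ctx 0 N Γ) ->
  typ gs (subst_ctx 0 N Γ) (subst_tm (length Γ) N (Var i))
         (subst_ty (length Γ) N (lift_ty (S i) 0 a)).
Proof.
  intros Hi Hok.
  assert (Hil : i < length (Γ ++ [ν])) by (apply nth_error_Some; congruence).
  rewrite length_app in Hil; simpl in Hil.
  destruct (Nat.lt_ge_cases i (length Γ)) as [Hlt|Hge].
  - rewrite nth_error_app1 in Hi by auto.
    simpl. case_index; try lia.
    replace (length Γ) with ((length Γ - S i) + S i) by lia.
    rewrite (proj2 (subst_lift_comm N N_closed)) by lia.
    apply t_var; auto. apply nth_error_subst_ctx. eauto.
  - replace i with (length Γ) in * by lia.
    rewrite nth_error_app2, Nat.sub_diag in Hi by lia. injection Hi as <-.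
    simpl. case_index; try lia.
    rewrite lift_ty_closed, subst_ty_closed by auto.
    exact (typ_weaken N_typ _ Hok).
Qed.

Lemma typ_subst Γ0 M s : typ gs Γ0 M s -> forall Γ, Γ0 = Γ ++ [ν] ->
  typ gs (subst_ctx 0 N Γ) (subst_tm (length Γ) N M) (subst_ty (length Γ) N s).
Proof.
  induction 1; intros Γ' ->;
    repeat progress (rewrite ?subst_arr by auto; cbn [subst_ty subst_tm];
                     rewrite ?(lift_tm_closed N 1 0 N_closed)).
  - apply typ_subst_var; auto. apply ctx_ok_subst; eauto.
  - apply t_lam. apply (IHtyp (s :: Γ')); auto.
  - pose proof (proj2 (subst_subst_comm N N_closed) t Q 0 (length Γ')) as E.
    simpl in E. rewrite E. specialize (IHtyp1 Γ' eq_refl). simpl in IHtyp1.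
    rewrite (lift_tm_closed N 1 0 N_closed) in IHtyp1. eapply t_app; eauto.
  - assert (Hok : ctx_ok (subst_ctx 0 N Γ')) by (apply ctx_ok_subst; eauto).
    destruct H1 as [[-> ->]|[[-> ->]|[[-> ->]|[[-> ->]|[[-> ->]|[(n&->&->)|(g&->&->)]]]]]];
    rewrite ?subst_arr by auto; simpl; apply t_const; auto;
    repeat first [ left; split; reflexivity | left; eexists; split; reflexivity
                 | eexists; split; reflexivity | right ].
  - apply t_ifc; auto.
  - apply t_Y with (map (subst_ty (length Γ') N) ts) (subst_ty (length Γ') N g).
    + rewrite <- subst_arrs by auto. apply (subst_conv N N_closed); auto.
    + destruct H0 as [->|(E & ->)]; simpl; eauto.
    + apply ctx_ok_subst; eauto.
    + intros p' Hp'. destruct (sC_subst N ν N_closed s _ _ Hp') as (Y & E & HY & ->).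
      exact (H4 _ HY (Y ++ Γ') (app_assoc _ _ _)).
  - apply t_idx_nat; auto.
  - apply t_plus; auto.
  - apply t_times; auto.
  - eapply t_size; eauto.
  - apply t_seq; auto.
  - apply t_par; auto.
  - apply t_rev; auto.
  - rewrite !subst_lift1_tm by auto. apply t_iter; auto.
  - apply t_dmeas; auto.
  - eapply t_conv; eauto. apply (subst_conv N N_closed); auto.
Qed.

End SubstOuter.
End Typing.

Section Computability.
Context {gs : gate_sig}.
Notation tm := (term (gname gs)).
Notation tp := (ty (gname gs)).

Lemma length_subst_base k (N : tm) (l : list tp) : length (subst_base gs k N l) = length l.
Proof. revert k; induction l; simpl; auto. Qed.

Lemma rev_subst_base k (N : tm) (l : list tp) :
  rev (subst_base gs k N l) = subst_ctx k N (rev l).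
Proof. revert k; induction l; intros k; simpl; auto. rewrite IHl, subst_ctx_snoc. auto. Qed.

Lemma nth_subst_base k (N : tm) (l : list tp) j : j < length l ->
  nth j (subst_base gs k N l) TNat = subst_ty (k + j) N (nth j l TNat).
Proof.
  revert k j; induction l; intros k [|j] Hj; simpl in *; try lia.
  - rewrite Nat.add_0_r; auto.
  - rewrite IHl, Nat.add_succ_r by lia. reflexivity.
Qed.

Lemma subst_piN (N : tm) taus k (γ : tp) : scoped_tm 0 N ->
  subst_ty k N (piN taus γ) =
  piN (subst_base gs k N taus) (subst_ty (k + length taus) N γ).
Proof.
  intros HN; revert k; induction taus; intros k; simpl. rewrite Nat.add_0_r; auto.
  rewrite (lift_tm_closed N 1 0 HN), IHtaus, Nat.add_succ_r. reflexivity.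
Qed.

Lemma osubst_ty_cons L (N : tm) Ns (t : tp) :
  osubst_ty gs (S L) (N :: Ns) t = osubst_ty gs L Ns (subst_ty L N t).
Proof. simpl. rewrite Nat.sub_0_r. reflexivity. Qed.

Lemma osubst_tm_cons L (N : tm) Ns (t : tm) :
  osubst_tm gs (S L) (N :: Ns) t = osubst_tm gs L Ns (subst_tm L N t).
Proof. simpl. rewrite Nat.sub_0_r. reflexivity. Qed.

Lemma osubst_ty_app Ns Qs K (t : tp) :
  osubst_ty gs (length Ns + K) (Ns ++ Qs) t =
  osubst_ty gs K Qs (osubst_ty gs (length Ns + K) Ns t).
Proof.
  revert t; induction Ns; intros t; simpl length; [reflexivity|].
  rewrite <- app_comm_cons, Nat.add_succ_l, !osubst_ty_cons. apply IHNs.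
Qed.

Lemma osubst_TNat L (Ns : list tm) : osubst_ty gs L Ns TNat = TNat.
Proof. revert L; induction Ns; intros; simpl; auto. Qed.

Lemma osubst_TIdx L (Ns : list tm) : osubst_ty gs L Ns TIdx = TIdx.
Proof. revert L; induction Ns; intros; simpl; auto. Qed.

Lemma osubst_TCirc L (Ns : list tm) E :
  osubst_ty gs L Ns (TCirc E) = TCirc (osubst_tm gs L Ns E).
Proof. revert L E; induction Ns; intros; simpl; auto. Qed.

(* [osubst_base L Ns l] instantiates the outer variables in a telescope [l]
   whose first entry lives in a context of length [L]. *)
Fixpoint osubst_base (L : nat) (Ns : list tm) (l : list tp) : list tp :=
  match Ns with
  | [] => l
  | N :: Ns' => osubst_base (L - 1) Ns' (subst_base gs (L - 1) N l)
  end.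

Lemma osubst_base_cons L (N : tm) Ns (l : list tp) :
  osubst_base (S L) (N :: Ns) l = osubst_base L Ns (subst_base gs L N l).
Proof. simpl. rewrite Nat.sub_0_r. reflexivity. Qed.

Lemma length_osubst_base L Ns (l : list tp) : length (osubst_base L Ns l) = length l.
Proof.
  revert L l; induction Ns; intros L l; simpl; auto.
  rewrite IHNs. apply length_subst_base.
Qed.

Lemma nth_osubst_base Ns (l : list tp) i : i < length l ->
  nth i (osubst_base (length Ns) Ns l) TNat = osubst_ty gs (length Ns + i) Ns (nth i l TNat).
Proof.
  revert l; induction Ns; intros l Hi; simpl length; [reflexivity|].
  rewrite osubst_base_cons, IHNs, nth_subst_base, <- osubst_ty_cons by
    (rewrite ?length_subst_base; auto).
  reflexivity.
Qed.

Lemma osubst_piN (Ns : list tm) taus (γ : tp) : (forall N, In N Ns -> scoped_tm 0 N) ->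
  osubst_ty gs (length Ns) Ns (piN taus γ) =
  piN (osubst_base (length Ns) Ns taus) (osubst_ty gs (length Ns + length taus) Ns γ).
Proof.
  revert taus γ; induction Ns as [|N Ns IH]; intros taus γ HNs; simpl length; [reflexivity|].
  rewrite osubst_ty_cons, osubst_base_cons, subst_piN, IH, length_subst_base
    by (intros; apply HNs; simpl; auto).
  rewrite Nat.add_succ_l, osubst_ty_cons. reflexivity.
Qed.

Lemma tsize_subst k (N : tm) (s : tp) : tsize gs (subst_ty k N s) = tsize gs s.
Proof. revert k N; induction s; intros; simpl; auto. Qed.

Lemma compF_fuel k k' (M : tm) s : tsize gs s <= k -> tsize gs s <= k' ->
  (compF gs k M s <-> compF gs k' M s).
Proof.
  revert k' M s; induction k; intros k' M s H1 H2; destruct s; simpl in H1; try lia;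
  destruct k'; simpl in H2; try lia; simpl; try tauto.
  - rewrite (IHk k'); simpl; try tauto; lia.
  - split; intros [Ht H]; split; auto; intros N HN;
      (apply (IHk k'); [rewrite tsize_subst; lia | rewrite tsize_subst; lia |]);
      apply H; apply (IHk k'); auto; lia.
Qed.

Lemma Comp0_pi (M : tm) a b : Comp0 gs M (TPi a b) <->
  typ gs [] M (TPi a b) /\ forall N, Comp0 gs N a -> Comp0 gs (App M N) (subst_ty 0 N b).
Proof.
  unfold Comp0; simpl.
  assert (Ha : forall N, compF gs (tsize gs a + tsize gs b) N a <-> compF gs (tsize gs a) N a)
    by (intros; apply compF_fuel; lia).
  assert (Hb : forall N P, compF gs (tsize gs a + tsize gs b) P (subst_ty 0 N b) <->
                         compF gs (tsize gs (subst_ty 0 N b)) P (subst_ty 0 N b))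
    by (intros; apply compF_fuel; rewrite tsize_subst; lia).
  split; intros [Ht H]; split; auto; intros N HN; apply Hb, H, Ha, HN.
Qed.

Lemma Comp0_TNat (M : tm) : Comp0 gs M TNat <-> typ gs [] M TNat.
Proof. unfold Comp0; simpl; tauto. Qed.

Lemma Comp0_typ {M : tm} {s} : Comp0 gs M s -> typ gs [] M s.
Proof. unfold Comp0. destruct s; simpl; tauto. Qed.

Lemma Comp0_closed {M : tm} {s} : Comp0 gs M s -> scoped_tm 0 M.
Proof. intros H. exact (proj1 (typ_scoped (Comp0_typ H))). Qed.

Lemma adm_N_cons a B N Ns : adm_N gs (a :: B) (N :: Ns) <->
  Comp0 gs N a /\ adm_N gs (subst_base gs 0 N B) Ns.
Proof.
  unfold adm_N. cbn [length]. rewrite length_subst_base. split.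
  - intros [Hl H]. split; [apply (H 0); lia|]. split; [lia|]. intros j Hj.
    specialize (H (S j) ltac:(lia)). cbn [nth firstn] in H.
    rewrite osubst_ty_cons in H. rewrite nth_subst_base by lia. exact H.
  - intros [H0 [Hl H]]. split; [lia|]. intros [|j] Hj; [exact H0|].
    cbn [nth firstn]. rewrite osubst_ty_cons. specialize (H j ltac:(lia)).
    rewrite nth_subst_base in H by lia. exact H.
Qed.

Lemma forall_adm_N_nil (Q : list tm -> Prop) :
  (forall Ns, adm_N gs [] Ns -> Q Ns) <-> Q [].
Proof.
  split.
  - intros H. apply H. split; simpl; auto; intros; lia.
  - intros H [|N Ns] [Hl _]; simpl in Hl; [exact H | discriminate].
Qed.

Lemma forall_adm_N_cons (Q : list tm -> Prop) a B :
  (forall Ns, adm_N gs (a :: B) Ns -> Q Ns) <->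
  (forall N, Comp0 gs N a -> forall Ns, adm_N gs (subst_base gs 0 N B) Ns -> Q (N :: Ns)).
Proof.
  split.
  - intros H N HN Ns HNs. apply H, adm_N_cons; auto.
  - intros H [|N Ns] HNs; [destruct HNs as [Hl _]; discriminate|].
    apply adm_N_cons in HNs as [HN HNs]. auto.
Qed.

Lemma adm_N_closed {B Ns} : adm_N gs B Ns -> forall N, In N Ns -> scoped_tm 0 N.
Proof.
  intros [Hl HN] N HIn. destruct (In_nth _ _ (Num 0) HIn) as (j & Hj & <-).
  eapply Comp0_closed, HN. lia.
Qed.

Lemma telescope_ind (P : list tp -> Prop) :
  P [] -> (forall a B, (forall N : tm, P (subst_base gs 0 N B)) -> P (a :: B)) ->
  forall B, P B.
Proof.
  intros Hnil Hcons B. remember (length B) as n eqn:Hn. revert B Hn.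
  induction n; intros [|a B] Hn; simpl in Hn; try discriminate; auto.
  apply Hcons. intros N. apply IHn. rewrite length_subst_base. congruence.
Qed.

Lemma Comp0_piN_iff {taus} {γ : tp} {M : tm} : typ gs [] M (piN taus γ) ->
  (Comp0 gs M (piN taus γ) <->
   forall Ps, adm_N gs taus Ps -> Comp0 gs (apps M Ps) (osubst_ty gs (length taus) Ps γ)).
Proof.
  revert γ M; induction taus as [|a taus IH] using telescope_ind; intros γ M Ht.
  - rewrite forall_adm_N_nil. reflexivity.
  - cbn [piN length] in *. rewrite Comp0_pi, forall_adm_N_cons.
    setoid_rewrite osubst_ty_cons. apply and_forall_iff; [exact Ht|]. intros P HP.
    assert (HPt := t_app Ht (Comp0_typ HP)).
    rewrite subst_piN in HPt |- * by exact (Comp0_closed HP).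
    rewrite (IH P _ _ HPt), length_subst_base. reflexivity.
Qed.

Lemma Comp_cons a B (M : tm) σ : Comp gs (a :: B) M σ <->
  typ gs (rev (a :: B)) M σ /\ forall N, Comp0 gs N a ->
    Comp gs (subst_base gs 0 N B) (subst_tm (length B) N M) (subst_ty (length B) N σ).
Proof.
  unfold Comp. cbn [CompF length].
  split; intros [Ht H]; split; auto; intros N HN; specialize (H N HN);
    rewrite length_subst_base in *; auto.
Qed.

Lemma typ_subst_outer {a B} {M : tm} {σ N} : typ gs (rev (a :: B)) M σ -> Comp0 gs N a ->
  typ gs (rev (subst_base gs 0 N B)) (subst_tm (length B) N M) (subst_ty (length B) N σ).
Proof.
  intros Ht HN. rewrite rev_subst_base, <- length_rev.
  apply typ_subst with (ν := a) (Γ0 := rev B ++ [a]); auto using Comp0_typ.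
  destruct (typ_scoped Ht) as [_ Hsc]. simpl in Hsc.
  specialize (Hsc (length (rev B)) a).
  rewrite nth_error_app2, Nat.sub_diag, length_app in Hsc by lia.
  replace (length (rev B) + length [a] - S (length (rev B))) with 0 in Hsc by (simpl; lia).
  exact (Hsc eq_refl).
Qed.

Lemma typ_osubst {B} {M : tm} {σ} : typ gs (rev B) M σ ->
  forall Ns, adm_N gs B Ns ->
  typ gs [] (osubst_tm gs (length B) Ns M) (osubst_ty gs (length B) Ns σ).
Proof.
  revert M σ; induction B as [|a B IH] using telescope_ind; intros M σ Ht.
  - rewrite forall_adm_N_nil. exact Ht.
  - rewrite forall_adm_N_cons. intros N HN Ns HNs. cbn [length].
    rewrite osubst_tm_cons, osubst_ty_cons.
    pose proof (IH N _ _ (typ_subst_outer Ht HN) Ns HNs) as H.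
    rewrite length_subst_base in H. exact H.
Qed.

Lemma Comp_iff_adm_N {B} {M : tm} {σ} : typ gs (rev B) M σ ->
  (Comp gs B M σ <-> forall Ns, adm_N gs B Ns ->
     Comp0 gs (osubst_tm gs (length B) Ns M) (osubst_ty gs (length B) Ns σ)).
Proof.
  revert M σ; induction B as [|a B IH] using telescope_ind; intros M σ Ht.
  - rewrite forall_adm_N_nil. reflexivity.
  - rewrite Comp_cons, forall_adm_N_cons. cbn [length].
    setoid_rewrite osubst_tm_cons. setoid_rewrite osubst_ty_cons.
    apply and_forall_iff; [exact Ht|]. intros N HN.
    rewrite (IH N _ _ (typ_subst_outer Ht HN)), length_subst_base. reflexivity.
Qed.

Lemma adm_P_iff {B Ns taus Ps} : length Ns = length B ->
  (adm_P gs B Ns taus Ps <-> adm_N gs (osubst_base (length Ns) Ns taus) Ps).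
Proof.
  intros Hl. unfold adm_P, adm_N. rewrite length_osubst_base, <- Hl.
  split; intros [HPl HP]; split; auto; intros i Hi; specialize (HP i Hi);
    rewrite nth_osubst_base, <- osubst_ty_app in *; auto.
Qed.

Lemma Comp0_osubst_piN_iff {B Ns} {M : tm} {taus γ} :
  adm_N gs B Ns -> typ gs (rev B) M (piN taus γ) ->
  (Comp0 gs (osubst_tm gs (length B) Ns M) (osubst_ty gs (length B) Ns (piN taus γ)) <->
   forall Ps, adm_P gs B Ns taus Ps ->
     Comp0 gs (apps (osubst_tm gs (length B) Ns M) Ps)
              (osubst_ty gs (length B + length taus) (Ns ++ Ps) γ)).
Proof.
  intros HNs Ht. pose proof (typ_osubst Ht Ns HNs) as HMt.
  pose proof (proj1 HNs) as Hl. rewrite <- Hl in *.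
  rewrite osubst_piN in HMt |- * by exact (adm_N_closed HNs).
  rewrite (Comp0_piN_iff HMt), length_osubst_base.
  setoid_rewrite osubst_ty_app. setoid_rewrite (adm_P_iff Hl). reflexivity.
Qed.

Lemma Comp_iff_adm {B} {M : tm} {taus γ} : typ gs (rev B) M (piN taus γ) ->
  (Comp gs B M (piN taus γ) <->
   forall Ns Ps, adm_N gs B Ns -> adm_P gs B Ns taus Ps ->
     Comp0 gs (apps (osubst_tm gs (length B) Ns M) Ps)
              (osubst_ty gs (length B + length taus) (Ns ++ Ps) γ)).
Proof.
  intros Ht. rewrite (Comp_iff_adm_N Ht).
  split; intros H Ns; [intros Ps|]; intros HNs;
    apply (Comp0_osubst_piN_iff HNs Ht); auto.
Qed.

End Computability.

Theorem lemma6 (gs : gate_sig) (B : list (ty (gname gs))) (M : term (gname gs))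
  (taus : list (ty (gname gs))) (γ : ty (gname gs)) :
  typ gs (rev B) M (piN taus γ) ->
  let n := length B in
  let m := length taus in
  let inst (Ns Ps : list (term (gname gs))) := apps (osubst_tm gs n Ns M) Ps in
  (γ = TNat ->
     (Comp gs B M (piN taus γ) <->
      forall Ns Ps, adm_N gs B Ns -> adm_P gs B Ns taus Ps ->
        typ gs [] (inst Ns Ps) TNat)) /\
  (γ = TIdx ->
     (Comp gs B M (piN taus γ) <->
      forall Ns Ps, adm_N gs B Ns -> adm_P gs B Ns taus Ps ->
        Comp0 gs (inst Ns Ps) TIdx)) /\
  (forall E, γ = TCirc E ->
     (Comp gs B M (piN taus γ) <->
      forall Ns Ps, adm_N gs B Ns -> adm_P gs B Ns taus Ps ->
        typ gs [] (inst Ns Ps) (TCirc (osubst_tm gs (n + m) (Ns ++ Ps) E)) /\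
        Comp0 gs (osubst_tm gs (n + m) (Ns ++ Ps) E) TIdx)).
Proof.
  intros Ht n m inst. subst n m inst.
  split; [|split]; [intros ->|intros ->|intros E ->]; rewrite (Comp_iff_adm Ht).
  - setoid_rewrite osubst_TNat. setoid_rewrite Comp0_TNat. reflexivity.
  - setoid_rewrite osubst_TIdx. reflexivity.
  - setoid_rewrite osubst_TCirc. reflexivity.
Qed.
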